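(* Let $R=\mathbb{Z}[i]$ and $\mu_4=\{1,i,-1,-i\}\subset R^\times$ (with $\iota$ the inclusion). Then: (i) $X=1+2i$ is an $\mathbb{S}[\mu_{4,+}]$-generator of $R$, i.e. every element of $R$ is uniquely a finite sum $\sum_k\alpha_kX^k$ with $\alpha_k\in\{0,1,i,-1,-i\}$; (ii) the hold is given by $0+1=1$ and $1+1=i-iX$, $i+1=-i+X$, $-i+1=-1-iX$; (iii) the field $R_1=R/XR$ is the finite field $\mathbb{F}_5$; (iv) the projective limit $\varprojlim_mR_m$ (with $R_m=R/X^mR$) is the Witt ring $W(\mathbb{F}_5)=\mathbb{Z}_5$, and $R_m$ is the quotient of $W(\mathbb{F}_5)$ by $5^mW(\mathbb{F}_5)$.
   Context: The hold records, for each $\xi\in\mu_4$, the unique representation of $\xi+1$ as a finite sum $\sum_k\alpha_kX^k$ with $\alpha_k\in\mu_4\cup\{0\}$ (for $\xi=-1$ this is the empty sum). $W(\mathbb{F}_5)=\mathbb{Z}_5$ is the ring of $5$-adic integers. *)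

From mathcomp Require Import all_boot all_order all_algebra all_field.
Set Implicit Arguments. Unset Strict Implicit. Unset Printing Implicit Defensive.
Import Order.TTheory GRing.Theory Num.Theory.
Local Open Scope ring_scope.

(* R = Z[i] as a subring of the algebraic complex numbers *)
Definition gaussInt : pred algC :=
  fun z => ('Re z \is a Num.int) && ('Im z \is a Num.int).

Definition X0 : algC := 1 + 2 * 'i.

Definition digits_set : seq algC := [:: 0; 1; 'i; -1; -'i].

Definition digit_sum (s : seq algC) : algC :=
  \sum_(k < size s) s`_k * X0 ^+ k.

(* normalised digit sequence: digits in {0,1,i,-1,-i}, no trailing zero
   (so the finite sum is represented without padding zeros) *)
Definition is_digit_seq (s : seq algC) : bool :=
  all (fun a => a \in digits_set) s && (last 1 s != 0).

Definition gdvd (a b : algC) : Prop := exists2 c, c \in gaussInt & b = a * c.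

From HB Require Import structures.
From mathcomp Require Import all_boot all_order all_algebra all_field.
From mathcomp Require Import zify ring.
Import Order.TTheory GRing.Theory Num.Theory.
Local Open Scope ring_scope.
Set Implicit Arguments. Unset Strict Implicit. Unset Printing Implicit Defensive.

(* In Z[i], X = 1 + 2i and X' = 1 - 2i satisfy X X' = 5 and X + X' = 2, so
   X (X' - 2) - 2 X' = 1 and X is coprime to X'.  Since i = 2 (mod X), we get
   a + bi = a + 2b (mod X): this gives the kernel 5Z of Z -> R/XR, and shows that
   the digits 0, 1, i, -1, -i, with residues 0, 1, 2, -1, -2, are a complete
   system of residues mod X.  Uniqueness of the expansions follows, and existence
   by descent: if z - d = X w for the digit d congruent to z <> 0, then
   5|w|^2 = |z - d|^2 <= (2|z|)^2.  Modulo X^m: a congruence z = n (mod X^m) lifts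
   to one mod X^(m+1) by adding a multiple of 15^m = X^m (3X')^m, as 3X' = 1
   (mod X); and X^(m+1) | n forces n = 5n' with X^m | X' n', so X^m | n' by
   coprimality. *)

Lemma gaussIntE z : (z \in gaussInt) = ('Re z \is a Num.int) && ('Im z \is a Num.int).
Proof. by []. Qed.

Fact gaussInt_subring_closed : subring_closed gaussInt.
Proof.
split=> [|x y|x y]; rewrite !gaussIntE.
- by rewrite (Creal_ReP 1 _) ?(Creal_ImP 1 _) ?rpred0 ?rpred1 ?real1.
- by case/andP=> ? ? /andP[? ?]; rewrite !raddfB /= !rpredB.
- by case/andP=> ? ? /andP[? ?]; rewrite ReM ImM rpredB ?rpredD ?rpredM.
Qed.

HB.instance Definition _ :=
  GRing.isSubringClosed.Build algC gaussInt gaussInt_subring_closed.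

Lemma gaussInt_i : 'i \in gaussInt.
Proof. by rewrite gaussIntE Re_i Im_i rpred0 rpred1. Qed.

Definition gint (a b : int) : algC := a%:~R + 'i * b%:~R.

Lemma gint_gauss a b : gint a b \in gaussInt.
Proof. by rewrite rpredD ?rpredM ?rpred_int ?gaussInt_i. Qed.

Lemma Re_gint a b : 'Re (gint a b) = a%:~R.
Proof. by rewrite Re_rect ?Rreal_int ?intr_int. Qed.

Lemma Im_gint a b : 'Im (gint a b) = b%:~R.
Proof. by rewrite Im_rect ?Rreal_int ?intr_int. Qed.

Lemma gint_inj a b c d : gint a b = gint c d -> a = c /\ b = d.
Proof.
move=> eq_ac_bd; split; apply/eqP; rewrite -(eqr_int algC).
  by rewrite -(Re_gint a b) eq_ac_bd Re_gint.
by rewrite -(Im_gint a b) eq_ac_bd Im_gint.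
Qed.

Lemma gaussIntP z : reflect (exists a b, z = gint a b) (z \in gaussInt).
Proof.
apply: (iffP idP) => [|[a [b ->]]]; last exact: gint_gauss.
rewrite gaussIntE => /andP[/intrP[a Rez] /intrP[b Imz]].
by exists a, b; rewrite [LHS]Crect Rez Imz.
Qed.

Lemma gintB a b c d : gint a b - gint c d = gint (a - c) (b - d).
Proof. by rewrite /gint subC_rect !rmorphB. Qed.

Lemma gintM a b c d : gint a b * gint c d = gint (a * c - b * d) (a * d + c * b).
Proof. by rewrite /gint mulC_rect !(rmorphB, rmorphD, rmorphM). Qed.

Lemma gint_int n : gint n 0 = n%:~R.
Proof. by rewrite /gint mulr0 addr0. Qed.

Lemma gauss_norm2_nat z : z \in gaussInt -> `|z| ^+ 2 \is a Num.nat.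
Proof.
rewrite gaussIntE normC2_Re_Im natrEint => /andP[ReZ ImZ].
by rewrite rpredD ?rpredX //= addr_ge0 ?real_exprn_even_ge0 ?Rreal_int.
Qed.

Lemma gauss_norm_ge1 z : z \in gaussInt -> z != 0 -> 1 <= `|z|.
Proof.
move=> Rz nz_z; have /natrP[n norm_z] := gauss_norm2_nat Rz.
rewrite -(expr_ge1 (isT : (0 < 2)%N)) // norm_z ler1n lt0n -(eqr_nat algC) -norm_z.
by rewrite expf_neq0 ?normr_eq0.
Qed.

Section GaussDivisibility.
Implicit Types p q r x y w : algC.

Lemma gdvd_trans p q r : gdvd p q -> gdvd q r -> gdvd p r.
Proof. by case=> c Rc -> [d Rd ->]; exists (c * d); rewrite ?rpredM ?mulrA. Qed.

Lemma gdvd1 x : x \in gaussInt -> gdvd 1 x.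
Proof. by exists x; rewrite ?mul1r. Qed.

Lemma gdvd_mulr p r : r \in gaussInt -> gdvd p (p * r).
Proof. by exists r. Qed.

Lemma gdvdD p x y : gdvd p x -> gdvd p y -> gdvd p (x + y).
Proof. by case=> c Rc -> [d Rd ->]; exists (c + d); rewrite ?rpredD ?mulrDr. Qed.

Lemma gdvdMl p r x : r \in gaussInt -> gdvd p x -> gdvd p (r * x).
Proof. by move=> Rr [c Rc ->]; exists (r * c); [exact: rpredM | exact: mulrCA]. Qed.

Lemma gdvd_mul2l r p q : gdvd p q -> gdvd (r * p) (r * q).
Proof. by case=> c Rc ->; exists c; rewrite ?mulrA. Qed.

Lemma gdvd_mul2lI r p q : r != 0 -> gdvd (r * p) (r * q) -> gdvd p q.
Proof. by move=> nz_r [c Rc]; rewrite -mulrA => /(mulfI nz_r) ->; exists c. Qed.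

Lemma gdvd_sub1X w k : w \in gaussInt -> gdvd (1 - w) (1 - w ^+ k).
Proof.
move=> Rw; elim: k => [|k IHk]; first by rewrite expr0 subrr; exists 0; rewrite ?rpred0 ?mulr0.
have -> : 1 - w ^+ k.+1 = (1 - w ^+ k) + w ^+ k * (1 - w) by rewrite exprS; ring.
by apply: gdvdD IHk _; rewrite mulrC; apply: gdvd_mulr; rewrite rpredX.
Qed.

Definition gcoprime p q : Prop :=
  exists u, exists2 v, (u \in gaussInt) && (v \in gaussInt) & p * u + q * v = 1.

Lemma gcoprimeXl p q k : p \in gaussInt -> gcoprime p q -> gcoprime (p ^+ k) q.
Proof.
move=> Rp [u [v /andP[Ru Rv] Bezout]].
have [c Rc def_c] : gdvd (1 - p * u) (1 - (p * u) ^+ k) by apply: gdvd_sub1X; rewrite rpredM.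
have qv : 1 - p * u = q * v by rewrite -Bezout; ring.
exists (u ^+ k), (v * c); first by rewrite rpredX ?rpredM.
by rewrite -exprMn mulrA -qv -def_c subrKC.
Qed.

Lemma Gauss_gdvd p q a : gcoprime p q -> a \in gaussInt -> gdvd p (q * a) -> gdvd p a.
Proof.
move=> [u [v /andP[Ru Rv] Bezout]] Ra [c Rc def_c].
exists (a * u + c * v); first by rewrite rpredD ?rpredM.
by rewrite mulrDr !mulrA -def_c -[LHS]mulr1 -Bezout; ring.
Qed.

End GaussDivisibility.

Lemma gauss_congr_int_expn Y Y' (N : int) :
  Y' \in gaussInt -> Y * Y' = N%:~R -> gdvd Y (1 - Y') ->
  (forall z, z \in gaussInt -> exists n : int, gdvd Y (z - n%:~R)) ->
  forall m z, z \in gaussInt -> exists n : int, gdvd (Y ^+ m) (z - n%:~R).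
Proof.
move=> RY' YY' Y'_1 congr_Y m z Rz; elim: m => [|m [n [c Rc def_c]]].
  by exists 0; rewrite expr0; apply: gdvd1; rewrite rpredB ?rpred_int.
have [k ck] := congr_Y c Rc.
exists (n + N ^+ m * k).
have -> : z - (n + N ^+ m * k)%:~R = Y ^+ m * ((c - k%:~R) + k%:~R * (1 - Y' ^+ m)).
  by rewrite rmorphD rmorphM rmorphXn /= -YY' exprMn; rewrite -[z](subrK n%:~R) def_c; ring.
rewrite exprSr; apply/gdvd_mul2l/gdvdD => //.
apply: gdvdMl; first exact: rpred_int.
exact: gdvd_trans Y'_1 (gdvd_sub1X m RY').
Qed.

Lemma gdvd_expn_int Y Y' (N : int) :
  Y \in gaussInt -> Y' \in gaussInt -> Y != 0 -> Y * Y' = N%:~R -> gcoprime Y Y' ->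
  (forall n : int, gdvd Y n%:~R <-> (N %| n)%Z) ->
  forall m (n : int), gdvd (Y ^+ m) n%:~R <-> (N ^+ m %| n)%Z.
Proof.
move=> RY RY' nzY YY' coYY' dvdY_int m n; split; last first.
  case/dvdzP=> q ->; rewrite rmorphM rmorphXn /= -YY' exprMn mulrC -mulrA.
  by apply: gdvd_mulr; rewrite rpredM ?rpredX ?rpred_int.
elim: m n => [|m IHm] n; first by rewrite expr0 dvd1z.
move=> dvdYm1_n; have /dvdY_int/dvdzP[n' def_n] : gdvd Y n%:~R.
  by apply: gdvd_trans dvdYm1_n; rewrite exprSr mulrC; apply: gdvd_mulr; rewrite rpredX.
rewrite def_n exprSr dvdz_mul ?IHm //.
apply: Gauss_gdvd (gcoprimeXl m RY coYY') (rpred_int _ _) _.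
apply: (gdvd_mul2lI nzY).
by rewrite -exprS mulrA YY' -rmorphM /= [N * _]mulrC -def_n.
Qed.

Definition X0conj : algC := 1 - 2 * 'i.

Lemma X0_gint : X0 = gint 1 2.
Proof. by rewrite /X0 /gint; ring. Qed.

Lemma X0conj_gint : X0conj = gint 1 (-2).
Proof. by rewrite /X0conj /gint; ring. Qed.

Lemma X0_gauss : X0 \in gaussInt.
Proof. by rewrite X0_gint gint_gauss. Qed.

Lemma X0conj_gauss : X0conj \in gaussInt.
Proof. by rewrite X0conj_gint gint_gauss. Qed.

Lemma X0_neq0 : X0 != 0.
Proof.
rewrite X0_gint; apply/eqP => /(congr1 (fun z => 'Re z)).
by rewrite Re_gint raddf0 => /eqP; rewrite oner_eq0.
Qed.

Lemma mulX0conj : X0 * X0conj = 5.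
Proof. by rewrite /X0 /X0conj; ring: (sqrCi algC). Qed.

Lemma normX0 : `|X0| ^+ 2 = 5.
Proof. by rewrite normC2_Re_Im X0_gint Re_gint Im_gint; ring. Qed.

Lemma gcoprime_X0 : gcoprime X0 X0conj.
Proof.
exists (X0conj - 2), (-2); first by rewrite rpredN rpredB ?X0conj_gauss // rpred_nat.
by rewrite /X0 /X0conj; ring: (sqrCi algC).
Qed.

Lemma gdvd_X0_gint a b : gdvd X0 (gint a b) <-> (5 %| a + 2 * b)%Z.
Proof.
split=> [[_ /gaussIntP[c [d ->]]]|/dvdzP[k def_k]].
  by rewrite X0_gint gintM => /gint_inj[-> ->]; apply/dvdzP; exists c; ring.
exists (gint k (b - 2 * k)); first exact: gint_gauss.
by rewrite X0_gint gintM; congr gint; lia.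
Qed.

Lemma gdvd_X0_int n : gdvd X0 n%:~R <-> (5 %| n)%Z.
Proof. by rewrite -gint_int gdvd_X0_gint mulr0 addr0. Qed.

Lemma gauss_congr_int_X0 z : z \in gaussInt -> exists n : int, gdvd X0 (z - n%:~R).
Proof.
case/gaussIntP=> a [b ->]; exists (a + 2 * b).
by rewrite -gint_int gintB gdvd_X0_gint; apply/dvdzP; exists 0; ring.
Qed.

Lemma gdvd_X0_1_sub3X0conj : gdvd X0 (1 - 3 * X0conj).
Proof.
exists (2 + 2 * 'i); first by rewrite rpredD ?rpredM ?rpred_nat ?gaussInt_i.
by rewrite /X0 /X0conj; ring: (sqrCi algC).
Qed.

Lemma gauss_congr_int_X0n m z : z \in gaussInt -> exists n : int, gdvd (X0 ^+ m) (z - n%:~R).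
Proof.
apply: (@gauss_congr_int_expn _ (3 * X0conj) 15) gdvd_X0_1_sub3X0conj gauss_congr_int_X0 m z.
  by rewrite rpredM ?rpred_nat ?X0conj_gauss.
by rewrite mulrCA mulX0conj -natrM.
Qed.

Lemma gdvd_X0n_int m n : gdvd (X0 ^+ m) n%:~R <-> ((5 ^ m)%:Z %| n)%Z.
Proof.
rewrite -natz natrX.
exact: (@gdvd_expn_int _ _ 5) X0_gauss X0conj_gauss X0_neq0 mulX0conj gcoprime_X0 gdvd_X0_int m n.
Qed.

Definition digit_coords : seq (int * int) := [:: (0, 0); (1, 0); (0, 1); (-1, 0); (0, -1)].

Lemma digits_setE : digits_set = [seq gint d.1 d.2 | d <- digit_coords].
Proof. by rewrite /digits_set /gint /=; congr [:: _; _; _; _; _]; ring. Qed.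

Lemma digit_coords_complete (r : int) :
  exists2 d, d \in digit_coords & (5 %| r - (d.1 + 2 * d.2))%Z.
Proof.
have s_lt5 : (r %% 5 < 5)%Z by apply: ltz_pmod.
have s_ge0 : (0 <= r %% 5)%Z by apply: modz_ge0.
move: (divz_eq r 5) s_ge0 s_lt5; move: (r %/ 5)%Z (r %% 5)%Z => q s def_r s_ge0 s_lt5.
have [s0|[s1|[s2|[s3|s4]]]] : s = 0 \/ s = 1 \/ s = 2 \/ s = 3 \/ s = 4 by lia.
- by exists (0, 0); rewrite ?inE //; apply/dvdzP; exists q => /=; lia.
- by exists (1, 0); rewrite ?inE //; apply/dvdzP; exists q => /=; lia.
- by exists (0, 1); rewrite ?inE //; apply/dvdzP; exists q => /=; lia.
- by exists (0, -1); rewrite ?inE //; apply/dvdzP; exists (q + 1) => /=; lia.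
- by exists (-1, 0); rewrite ?inE //; apply/dvdzP; exists (q + 1) => /=; lia.
Qed.

Lemma digit_coords_incongruent :
  {in digit_coords &, forall d e, (5 %| (d.1 + 2 * d.2) - (e.1 + 2 * e.2))%Z -> d = e}.
Proof.
have /allrelP incongr :
  allrel (fun d e => (5 %| (d.1 + 2 * d.2) - (e.1 + 2 * e.2))%Z ==> (d == e))
         digit_coords digit_coords by [].
by move=> d e Dd De /(implyP (incongr d e Dd De))/eqP.
Qed.

Lemma digit_gauss x : x \in digits_set -> x \in gaussInt.
Proof. by rewrite digits_setE => /mapP[d _ ->]; apply: gint_gauss. Qed.

Lemma norm_digit_le1 x : x \in digits_set -> `|x| <= 1.
Proof. by rewrite !inE => /orP[/eqP->|/or4P[] /eqP->]; rewrite ?normrN ?normCi ?normr0 ?normr1. Qed.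

Lemma digit_congr_exists z : z \in gaussInt -> exists2 d, d \in digits_set & gdvd X0 (z - d).
Proof.
case/gaussIntP=> a [b ->]; have [d Dd dvd5] := digit_coords_complete (a + 2 * b).
exists (gint d.1 d.2); first by rewrite digits_setE (map_f (fun d => gint d.1 d.2)).
by rewrite gintB gdvd_X0_gint; congr (_ %| _)%Z: dvd5; ring.
Qed.

Lemma digit_congr_eq x y : x \in digits_set -> y \in digits_set -> gdvd X0 (x - y) -> x = y.
Proof.
rewrite digits_setE => /mapP[d Dd ->] /mapP[e De ->].
rewrite gintB gdvd_X0_gint => dvd5.
by rewrite (digit_coords_incongruent Dd De) //; congr (_ %| _)%Z: dvd5; ring.
Qed.

Lemma digit_sum_nil : digit_sum [::] = 0.
Proof. by rewrite /digit_sum big_ord0. Qed.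

Lemma digit_sum_cons d s : digit_sum (d :: s) = d + X0 * digit_sum s.
Proof.
rewrite /digit_sum /= big_ord_recl /= expr0 mulr1 mulr_sumr; congr (_ + _).
by apply: eq_bigr => k _; rewrite exprS mulrCA.
Qed.

Lemma is_digit_seq_cons d s :
  is_digit_seq (d :: s) = (d \in digits_set) && (if s is [::] then d != 0 else is_digit_seq s).
Proof. by case: s => [|e s]; rewrite /is_digit_seq /= ?andbT -?andbA. Qed.

Lemma is_digit_seq_nil : is_digit_seq [::].
Proof. by rewrite /is_digit_seq /= oner_neq0. Qed.

Lemma is_digit_seq_tail d s : is_digit_seq (d :: s) -> is_digit_seq s.
Proof. by case: s => [|e s]; rewrite ?is_digit_seq_nil // is_digit_seq_cons => /andP[]. Qed.

Lemma is_digit_seq_sub s : is_digit_seq s -> {subset s <= digits_set}.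
Proof. by case/andP=> /allP. Qed.

Lemma digit_sum_gauss s : is_digit_seq s -> digit_sum s \in gaussInt.
Proof.
move/is_digit_seq_sub=> sD; apply: rpred_sum => k _.
by rewrite rpredM ?rpredX ?X0_gauss ?digit_gauss ?sD ?mem_nth.
Qed.

Lemma digit_sum_cons_inj d e x y :
  d \in digits_set -> e \in digits_set -> x \in gaussInt -> y \in gaussInt ->
  d + X0 * x = e + X0 * y -> d = e /\ x = y.
Proof.
move=> Dd De Rx Ry eq_dx_ey.
have d_e : d = e.
  apply: digit_congr_eq Dd De _; exists (y - x); first by rewrite rpredB.
  by rewrite -[d](addrK (X0 * x)) eq_dx_ey; ring.
by split=> //; move: eq_dx_ey; rewrite d_e => /addrI/(mulfI X0_neq0).
Qed.

Lemma digit_sum_eq0 s : is_digit_seq s -> digit_sum s = 0 -> s = [::].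
Proof.
elim: s => [//|d s IHs] ds; rewrite digit_sum_cons => sum0.
have Dd := is_digit_seq_sub ds (mem_head d s).
have [d0 sum_s0] : d = 0 /\ digit_sum s = 0.
  apply: digit_sum_cons_inj; rewrite ?Dd ?inE ?eqxx ?rpred0 //.
    exact/digit_sum_gauss/(is_digit_seq_tail ds).
  by rewrite sum0 mulr0 addr0.
have s0 := IHs (is_digit_seq_tail ds) sum_s0.
by move: ds; rewrite d0 s0 is_digit_seq_cons eqxx andbF.
Qed.

Lemma digit_sum_inj : {in is_digit_seq &, injective digit_sum}.
Proof.
elim=> [|d s IHs] [|e t] ds dt //; rewrite ?digit_sum_nil.
- by move/esym/(digit_sum_eq0 dt).
- by move/(digit_sum_eq0 ds).
have Dd := is_digit_seq_sub ds (mem_head d s); have De := is_digit_seq_sub dt (mem_head e t).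
have ds' := is_digit_seq_tail ds; have dt' := is_digit_seq_tail dt.
rewrite !digit_sum_cons => /digit_sum_cons_inj[] //; rewrite ?digit_sum_gauss //.
by move=> -> /(IHs t ds' dt') ->.
Qed.

Lemma digit_quotient_norm_lt z d w :
  z \in gaussInt -> z != 0 -> `|d| <= 1 -> z - d = X0 * w -> `|w| ^+ 2 < `|z| ^+ 2.
Proof.
move=> Rz nz_z d_le1 def_w; have z_ge1 := gauss_norm_ge1 Rz nz_z.
have zd_le : `|z - d| <= `|z| *+ 2.
  by rewrite (le_trans (ler_normB z d)) // mulr2n lerD2l (le_trans d_le1).
rewrite -(ltr_pM2l (_ : 0 < 5)) ?ltr0n //.
have -> : 5 * `|w| ^+ 2 = `|z - d| ^+ 2 by rewrite def_w normrM exprMn normX0.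
apply: (@le_lt_trans _ _ ((`|z| *+ 2) ^+ 2)).
  by rewrite ler_pXn2r ?nnegrE ?normr_ge0 ?mulrn_wge0.
rewrite exprMn_n mulr_natl ltr_pMn2l //.
by rewrite (lt_le_trans ltr01) // exprn_ege1.
Qed.

Lemma digit_expansion_exists z : z \in gaussInt -> exists2 s, is_digit_seq s & z = digit_sum s.
Proof.
move=> Rz; have /natrP[n] := gauss_norm2_nat Rz.
elim/ltn_ind: n z Rz => n IHn z Rz norm_z.
have [->|nz_z] := eqVneq z 0; first by exists [::]; rewrite ?is_digit_seq_nil ?digit_sum_nil.
have [d Dd [w Rw def_w]] := digit_congr_exists Rz.
have /natrP[m norm_w] := gauss_norm2_nat Rw.
have m_lt_n : (m < n)%N.
  rewrite -(ltr_nat algC) -norm_w -norm_z.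
  by rewrite (digit_quotient_norm_lt Rz nz_z _ def_w) ?norm_digit_le1.
have [s ds def_s] := IHn m m_lt_n w Rw norm_w.
exists (d :: s); last by rewrite digit_sum_cons -def_s -def_w addrC subrK.
rewrite is_digit_seq_cons Dd; case: s ds def_s => // _ w0.
by move: def_w; rewrite w0 digit_sum_nil mulr0 => /subr0_eq <-.
Qed.

Theorem proposition6p10 :
  [/\
   (* (i) X = 1+2i is a generator: unique digit expansion of every element of R *)
   (forall z : algC, z \in gaussInt ->
      exists! s : seq algC, is_digit_seq s /\ z = digit_sum s),
   (* (ii) the hold *)
   [/\ 0 + 1 = digit_sum [:: 1],
       1 + 1 = digit_sum [:: 'i; - 'i],
       'i + 1 = digit_sum [:: - 'i; 1],
       - 'i + 1 = digit_sum [:: -1; - 'i]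
     & -1 + 1 = digit_sum [::]],
   (* (iii) R_1 = R/XR is F_5: the ring map Z -> R/XR is onto with kernel 5Z *)
   (forall z : algC, z \in gaussInt -> exists n : int, gdvd X0 (z - n%:~R))
     /\ (forall n : int, gdvd X0 n%:~R <-> (5 %| n)%Z)
   &
   (* (iv) R_m = R/X^m R is Z/5^m Z = W(F_5)/5^m W(F_5), compatibly in m *)
   forall m : nat,
     (forall z : algC, z \in gaussInt ->
        exists n : int, gdvd (X0 ^+ m) (z - n%:~R))
     /\ (forall n : int, gdvd (X0 ^+ m) n%:~R <-> ((5 ^ m)%:Z %| n)%Z)].
Proof.
split.
- move=> z /digit_expansion_exists[s ds def_z]; exists s; split=> // t [dt def_t].
  by apply: digit_sum_inj; rewrite -?def_z -?def_t.
- by split; rewrite ?digit_sum_cons digit_sum_nil /X0; ring: (sqrCi algC).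
- by split; [exact: gauss_congr_int_X0 | exact: gdvd_X0_int].
- by split; [exact: gauss_congr_int_X0n | exact: gdvd_X0n_int].
Qed.
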